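(* Let $a, n \in \mathbb{N}$, $d = 2^a$, $\eta = 1/n$, and $j \ge n + a + 1$. Let $L_1 \subset L_2 \subset \dots \subset L_{n+2}$ be a chain of dyadic intervals with $L_i \in \mathcal{D}_{j-a-i+1}$, and for $i = 1, \dots, n+1$ let $P_i = L_{i+1} \setminus L_i$ be the dyadic brother of $L_i$ in $L_{i+1}$. Let $I_1, \dots, I_{d-1} \in \mathcal{D}_j$ be distinct intervals with $I_i \subset L_1$, and let $J_1, \dots, J_{n+1} \in \mathcal{D}_j$ with $J_i \subset P_i$. For $k = 0, \dots, n$ put $$\mathcal{C}(k) = \{I_1, \dots, I_{d-1}\} \cup \{J_{n-k+1}, \dots, J_{n+1}\}.$$ Then the sequence $\mathcal{C}(0) \subset \mathcal{C}(1) \subset \dots \subset \mathcal{C}(n)$ is increasing and: (A) There exists exactly one, up to permutation of the colours, $(\eta,d)$-homogeneous colouring $\mathcal{C}(0) = \mathcal{C}_1(0) \cup \dots \cup \mathcal{C}_d(0)$. (B) For each $1 \le k \le n-1$: given the $(\eta,d)$-homogeneous colouring $\mathcal{C}(k-1) = \mathcal{C}_1(k-1) \cup \dots \cup \mathcal{C}_d(k-1)$ obtained at stage $k-1$, there exists exactly one $(\eta,d)$-homogeneous colouring $\mathcal{C}(k) = \mathcal{C}_1(k) \cup \dots \cup \mathcal{C}_d(k)$ such that $\mathcal{C}_i(k-1) \subset \mathcal{C}_i(k)$ for all $1 \le i \le d$. (C) Given the $(\eta,d)$-homogeneous colouring $\mathcal{C}(n-1) = \mathcal{C}_1(n-1)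 \cup \dots \cup \mathcal{C}_d(n-1)$ obtained at stage $n-1$, there does not exist an $(\eta,d)$-homogeneous colouring $\mathcal{C}(n) = \mathcal{C}_1(n) \cup \dots \cup \mathcal{C}_d(n)$ such that $\mathcal{C}_i(n-1) \subset \mathcal{C}_i(n)$ for all $1 \le i \le d$.
   Context: $\mathcal{D}$ denotes the collection of dyadic subintervals of $[0,1]$ and $\mathcal{D}_m = \{I \in \mathcal{D} : |I| = 2^{-m}\}$. For a collection $\mathcal{A}$ of dyadic intervals and $L \in \mathcal{D}$, write $\mathcal{A} \cap L = \{I \in \mathcal{A} : I \subset L\}$, and $|\mathcal{A}|$ for its cardinality. A colouring of $\mathcal{A}$ with $d$ colours is a decomposition $\mathcal{A} = \mathcal{A}_1 \cup \dots \cup \mathcal{A}_d$ into pairwise disjoint (possibly empty) subcollections. For $\mathcal{A} \subset \mathcal{D}_j$, $d \in \mathbb{N}$ and $\eta > 0$, such a decomposition is called an $(\eta,d)$-homogeneous colouring if for every $L \in \mathcal{D}$ with $|L| \ge 2^{-j}$ one of the following holds: either $|\mathcal{A} \cap L| > d$ and $\eta \max_{1\le i\le d} |\mathcal{A}_i \cap L| \le \min_{1 \le i \le d} |\mathcal{A}_i \cap L|$; or $|\mathcal{A} \cap L| \le d$ and $|\mathcal{A}_i \cap L| \le 1$ for each $1 \le i \le d$. ''Up to permutation'' means up to relabelling the colours $1,\dots,d$. *)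

From mathcomp Require Import all_boot all_order all_algebra all_fingroup.
Set Implicit Arguments. Unset Strict Implicit. Unset Printing Implicit Defensive.
Import Order.TTheory GRing.Theory Num.Theory.
Local Open Scope ring_scope.

(* A dyadic interval [k 2^-m, (k+1) 2^-m) of [0,1], coded by (m, k). *)
Record dyad := Dyad { dlev : nat; dpos : nat }.

Definition dvalid (I : dyad) : bool := (dpos I < 2 ^ dlev I)%N.

Definition dsub (I L : dyad) : bool :=
  (dlev L <= dlev I)%N && (dpos I %/ 2 ^ (dlev I - dlev L) == dpos L)%N.

Definition dbrother (I : dyad) : dyad :=
  Dyad (dlev I) (if odd (dpos I) then (dpos I).-1 else (dpos I).+1).

(* D_j is identified with 'I_(2^j): x <-> [x 2^-j, (x+1) 2^-j) *)
Definition dyD (j : nat) (x : 'I_(2 ^ j)) : dyad := Dyad j x.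

Definition restr (j : nat) (A : {set 'I_(2 ^ j)}) (L : dyad) : {set 'I_(2 ^ j)} :=
  [set x in A | dsub (dyD x) L].

Definition colouring (j d : nat) (A : {set 'I_(2 ^ j)})
    (C : {ffun 'I_d -> {set 'I_(2 ^ j)}}) : Prop :=
  (forall i i' : 'I_d, i != i' -> [disjoint C i & C i']) /\
  \bigcup_(i < d) C i = A.

(* (eta,d)-homogeneous colouring.  "eta * max_i |A_i ∩ L| <= min_i |A_i ∩ L|"
   is written out as: for all colours i, i', eta * |A_i ∩ L| <= |A_i' ∩ L|. *)
Definition homogeneous (j d : nat) (eta : rat) (A : {set 'I_(2 ^ j)})
    (C : {ffun 'I_d -> {set 'I_(2 ^ j)}}) : Prop :=
  colouring A C /\
  forall L : dyad, dvalid L -> (dlev L <= j)%N ->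
    ((d < #|restr A L|)%N /\
       forall i i' : 'I_d,
         eta * (#|restr (C i) L|)%:R <= (#|restr (C i') L|)%:R)
    \/
    ((#|restr A L| <= d)%N /\ forall i : 'I_d, (#|restr (C i) L| <= 1)%N).

Definition extends (j d : nat) (Y X : {ffun 'I_d -> {set 'I_(2 ^ j)}}) : Prop :=
  forall i : 'I_d, Y i \subset X i.

(* Colourings "obtained at stage k": stage 0 = homogeneous colourings of Cs 0;
   stage k+1 = homogeneous colourings of Cs (k+1) extending a stage-k colouring. *)
Fixpoint stage (j d : nat) (eta : rat) (Cs : nat -> {set 'I_(2 ^ j)}) (k : nat)
    (X : {ffun 'I_d -> {set 'I_(2 ^ j)}}) : Prop :=
  match k with
  | 0 => homogeneous eta (Cs 0%N) X
  | k'.+1 => homogeneous eta (Cs k'.+1) X /\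
             exists Y, stage eta Cs k' Y /\ extends Y X
  end.

From mathcomp Require Import all_boot all_order all_algebra all_fingroup zify.
Import Order.TTheory GRing.Theory Num.Theory.
Local Open Scope ring_scope.
Set Implicit Arguments. Unset Strict Implicit. Unset Printing Implicit Defensive.

(* Every homogeneous colouring along the chain is, up to permutation, the canonical one:
   the d-1 intervals I_t in singleton colours and all the J's in the remaining colour.
   At stage 0 the collection has exactly d elements, so all colours are singletons.
   When J_(n-k) is added, the interval L_(n-k+1) contains all I's and J_(n-k) but no
   other J, hence at most d elements of the collection; there colours have at most one
   element, so J_(n-k) cannot join an I.  The canonical colouring stays homogeneous as
   long as the J-colour has at most n elements, since a dyadic interval meeting two J's
   contains some L_i and therefore all I's.  At stage n the J-colour has n+1 elements
   against singleton colours, and the ratio 1/n fails on [0,1]. *)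

Lemma dsub_refl (A : dyad) : dsub A A.
Proof. by rewrite /dsub leqnn subnn expn0 divn1 eqxx. Qed.

Lemma divn_exp2_sub (x m p q : nat) : (q <= p <= m)%N ->
  (x %/ 2 ^ (m - q) = x %/ 2 ^ (m - p) %/ 2 ^ (p - q))%N.
Proof. by move=> h; rewrite -divnMA -expnD; congr (_ %/ 2 ^ _)%N; lia. Qed.

Lemma dsub_trans (A B C : dyad) : dsub A B -> dsub B C -> dsub A C.
Proof.
case/andP=> lBA /eqP pB /andP [lCB /eqP pC].
rewrite /dsub (leq_trans lCB lBA) -pC -pB -divn_exp2_sub ?eqxx //.
by rewrite lCB lBA.
Qed.

Lemma dsub_nested (X A B : dyad) :
  dsub X A -> dsub X B -> (dlev A <= dlev B)%N -> dsub B A.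
Proof.
case/andP=> lAX /eqP pA /andP [lBX /eqP pB] lAB.
by rewrite /dsub lAB -pA -pB -divn_exp2_sub ?eqxx // lAB.
Qed.

Lemma dbrother_neq (P : dyad) : dpos (dbrother P) != dpos P.
Proof. by rewrite /=; case: ifP => odd_p; apply/eqP; lia. Qed.

Lemma half_dbrother (P : dyad) : (dpos (dbrother P) %/ 2 = dpos P %/ 2)%N.
Proof.
rewrite /=; have := odd_double_half (dpos P); rewrite -divn2 -muln2.
by case: ifP => _; lia.
Qed.

Lemma dsub_dbrother_contra (X P : dyad) : dsub X (dbrother P) -> ~~ dsub X P.
Proof.
case/andP=> _ /eqP pB; apply/negP => /andP [_ /eqP pP].
by move: (dbrother_neq P); rewrite -pB -pP eqxx.
Qed.

Lemma dsub_dbrother (P Q : dyad) :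
  (dlev Q < dlev P)%N -> dsub P Q -> dsub (dbrother P) Q.
Proof.
move=> lQP /andP [_ /eqP pQ]; rewrite /dsub /= (ltnW lQP) -pQ.
have e : (dlev P - dlev Q = (dlev P - dlev Q).-1.+1)%N by lia.
by rewrite e expnS !divnMA; have /= -> := half_dbrother P.
Qed.

Lemma card_le1_set1 (T : finType) (A : {set T}) x :
  (#|A| <= 1)%N -> x \in A -> A = [set x].
Proof.
move=> A_le1 xA; apply/setP => y; rewrite inE.
by apply/idP/eqP => [yA|->//]; apply: (card_le1_eqP A_le1).
Qed.

Section Colourings.
Variables (j d : nat).
Implicit Types (A : {set 'I_(2 ^ j)}) (X Y : {ffun 'I_d -> {set 'I_(2 ^ j)}}).

Lemma colouring_cover A X x : colouring A X -> x \in A -> exists i, x \in X i.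
Proof. by case=> _ <- /bigcupP [i _ xX]; exists i. Qed.

Lemma colouring_subset A X i : colouring A X -> X i \subset A.
Proof. by case=> _ <-; apply: (bigcup_sup i). Qed.

Lemma colouring_inj A X x i i' :
  colouring A X -> x \in X i -> x \in X i' -> i = i'.
Proof.
case=> disjX _ xi xi'; case: (eqVneq i i') => // neq_ii'.
by move: (disjX i i' neq_ii') => /disjointFr /(_ xi); rewrite xi'.
Qed.

Lemma colouring_extend1 A z X Y :
  colouring A X -> colouring (A :|: [set z]) Y -> extends X Y ->
  exists c, forall i, Y i = if i == c then X i :|: [set z] else X i.
Proof.
move=> colX colY XY.
have [c zc] : exists c, z \in Y c by apply: (colouring_cover colY); rewrite !inE eqxx orbT.
exists c => i; apply/setP => y; apply/idP/idP => [yY|].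
  have := subsetP (colouring_subset i colY) y yY; rewrite !inE => /orP [yA|/eqP yz].
    have [i' yX] := colouring_cover colX yA.
    have -> : i = i' by apply: (colouring_inj colY yY); apply: (subsetP (XY i')).
    by case: ifP => _; rewrite ?inE yX.
  by rewrite yz in yY *; rewrite (colouring_inj colY yY zc) eqxx !inE eqxx orbT.
case: ifP => [/eqP -> | _]; last exact: (subsetP (XY i)).
by rewrite !inE => /orP [yX|/eqP ->//]; apply: (subsetP (XY c)).
Qed.

Definition recolour (s : {perm 'I_d}) X : {ffun 'I_d -> {set 'I_(2 ^ j)}} :=
  [ffun i => X (s i)].

Lemma recolourK (s : {perm 'I_d}) X : recolour s^-1 (recolour s X) = X.
Proof. by apply/ffunP => i; rewrite !ffunE permKV. Qed.

Lemma recolourKV (s : {perm 'I_d}) X : recolour s (recolour s^-1 X) = X.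
Proof. by apply/ffunP => i; rewrite !ffunE permK. Qed.

Lemma extends_recolour (s : {perm 'I_d}) X Y :
  extends X Y -> extends (recolour s X) (recolour s Y).
Proof. by move=> XY i; rewrite !ffunE. Qed.

Lemma colouring_recolour (s : {perm 'I_d}) A X :
  colouring A X -> colouring A (recolour s X).
Proof.
case=> disjX <-; split=> [i i' neq_ii'|].
  by rewrite !ffunE; apply: disjX; apply: contra neq_ii' => /eqP /perm_inj ->.
apply/setP => y; apply/bigcupP/bigcupP => [[i _]|[i _ yX]].
  by rewrite ffunE => yX; exists (s i).
by exists (s^-1 i)%g; rewrite ?ffunE ?permKV.
Qed.

Lemma homogeneous_recolour eta (s : {perm 'I_d}) A X :
  homogeneous eta A X -> homogeneous eta A (recolour s X).
Proof.
case=> colX homX; split; first exact: colouring_recolour.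
move=> K vK lK; case: (homX K vK lK) => [[? ?]|[? ?]]; [left|right].
  by split=> // i i'; rewrite !ffunE.
by split=> // i; rewrite ffunE.
Qed.

Lemma colouring_singletons_perm A (e : 'I_d -> 'I_(2 ^ j)) X Y :
  colouring A X -> colouring A Y -> (forall i, X i = [set e i]) ->
  (forall i, #|Y i| <= 1)%N -> exists s : {perm 'I_d}, Y = recolour s X.
Proof.
move=> colX colY Xe Y_le1.
have eX i : e i \in X i by rewrite Xe set11.
have [g egY] : exists g : 'I_d -> 'I_d, forall i, e i \in Y (g i).
  suff /fin_all_exists [g egY] : forall i, exists c, e i \in Y c by exists g.
  move=> i; apply: (colouring_cover colY).
  exact: subsetP (colouring_subset i colX) _ (eX i).
have Yg i : Y (g i) = X i by rewrite Xe (card_le1_set1 (Y_le1 _) (egY i)).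
have g_inj : injective g.
  move=> i i' gii'; apply: (colouring_inj colX (eX i)).
  have -> : e i = e i' by apply: (card_le1_eqP (Y_le1 (g i))); rewrite // gii'.
  exact: eX.
exists (perm g_inj)^-1%g; apply/ffunP => c.
by rewrite ffunE -{1}(permKV (perm g_inj) c) permE Yg.
Qed.

End Colourings.

Lemma restr_root (j : nat) (A : {set 'I_(2 ^ j)}) : restr A (Dyad 0 0) = A.
Proof. by apply/setP => x; rewrite !inE /dsub /= subn0 divn_small ?eqxx ?andbT. Qed.

Lemma restrU (j : nat) (A B : {set 'I_(2 ^ j)}) K :
  restr (A :|: B) K = restr A K :|: restr B K.
Proof. by apply/setP => x; rewrite !inE andb_orl. Qed.

Lemma restr_subset (j : nat) (A : {set 'I_(2 ^ j)}) K : restr A K \subset A.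
Proof. by apply/subsetP => x /setIdP []. Qed.

Lemma homogeneous_card_le1 (j d : nat) eta (A : {set 'I_(2 ^ j)})
    (X : {ffun 'I_d -> {set 'I_(2 ^ j)}}) K :
  homogeneous eta A X -> dvalid K -> (dlev K <= j)%N -> (#|restr A K| <= d)%N ->
  forall i, (#|restr (X i) K| <= 1)%N.
Proof.
case=> _ homX vK lK A_le; case: (homX K vK lK) => [[A_gt _]|[_ //]].
by move: A_gt; rewrite ltnNge A_le.
Qed.

Lemma ler_invn_mulr_nat (R : numFieldType) (n x y : nat) :
  (x <= n)%N -> (0 < y)%N -> (n%:R)^-1 * x%:R <= y%:R :> R.
Proof.
move=> xn y_gt0; apply: (@le_trans _ _ 1); last by rewrite ler1n.
case: n xn => [|n] xn; first by rewrite invr0 mul0r.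
by rewrite mulrC ler_pdivrMr ?ltr0n // mul1r ler_nat.
Qed.

Lemma ltr_invn_mulr_succ (R : numFieldType) (n : nat) :
  (0 < n)%N -> 1 < (n%:R)^-1 * n.+1%:R :> R.
Proof. by move=> n_gt0; rewrite mulrC ltr_pdivlMr ?ltr0n // mul1r ltr_nat. Qed.

Section CanonicalColouring.
Variables (a n j : nat) (I : 'I_(2 ^ a).-1 -> 'I_(2 ^ j)) (J : nat -> 'I_(2 ^ j)).

Definition Iset := [set I t | t : 'I_(2 ^ a).-1].
Definition Jset k := [set x | [exists i : 'I_(n + 2), (n - k + 1 <= i)%N && (x == J i)]].
Definition coll k := Iset :|: Jset k.

Lemma JsetP k x :
  reflect (exists2 i, (n - k + 1 <= i <= n + 1)%N & x = J i) (x \in Jset k).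
Proof.
rewrite inE; apply: (iffP existsP) => [[i /andP [ki /eqP ->]]|[i ki ->]].
  by exists i => //; have := ltn_ord i; lia.
have i_lt : (i < n + 2)%N by lia.
by exists (Ordinal i_lt); rewrite /= eqxx andbT; lia.
Qed.

Lemma Jset0 : Jset 0 = [set J (n + 1)%N].
Proof.
apply/setP => x; rewrite inE; apply/JsetP/eqP => [[i hi ->]|->]; first by congr J; lia.
by exists (n + 1)%N => //; lia.
Qed.

Lemma JsetS k : (k < n)%N -> Jset k.+1 = (J (n - k)%N) |: Jset k.
Proof.
move=> kn; apply/setP => x; rewrite in_setU1.
apply/JsetP/orP => [[i hi ->]|[/eqP ->|/JsetP [i hi ->]]].
- case: (eqVneq i (n - k)%N) => [->|neq]; first by left.
  by right; apply/JsetP; exists i => //; lia.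
- by exists (n - k)%N => //; lia.
- by exists i => //; lia.
Qed.

Lemma Jset_subset k k' : (k <= k')%N -> Jset k \subset Jset k'.
Proof.
by move=> kk'; apply/subsetP => x /JsetP [i hi ->]; apply/JsetP; exists i => //; lia.
Qed.

Lemma coll_succ k : (k < n)%N -> coll k.+1 = coll k :|: [set J (n - k)%N].
Proof. by move=> kn; rewrite /coll JsetS // [_ |: _]setUC setUA. Qed.

Lemma expn2_gt0 : (0 < 2 ^ a)%N.
Proof. by rewrite expn_gt0. Qed.

(* The colour reserved for the J's; the other colours are indexed by lift jcol. *)
Definition jcol : 'I_(2 ^ a) := Ordinal expn2_gt0.

Definition canon k : {ffun 'I_(2 ^ a) -> {set 'I_(2 ^ j)}} :=
  [ffun i => if unlift jcol i is Some t then [set I t] else Jset k].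

Lemma canon_jcol k : canon k jcol = Jset k.
Proof. by rewrite ffunE unlift_none. Qed.

Lemma canon_lift k t : canon k (lift jcol t) = [set I t].
Proof. by rewrite ffunE liftK. Qed.

Lemma canon0 i :
  canon 0 i = [set if unlift jcol i is Some t then I t else J (n + 1)%N].
Proof. by rewrite ffunE; case: unlift => // ; rewrite Jset0. Qed.

Lemma canon_extends k k' : (k <= k')%N -> extends (canon k) (canon k').
Proof.
move=> kk' i; case: (unliftP jcol i) => [t ->|->]; first by rewrite !canon_lift.
by rewrite !canon_jcol Jset_subset.
Qed.

End CanonicalColouring.

Section Construction.
Variables (a n j : nat) (L : nat -> dyad).
Variables (I : 'I_(2 ^ a).-1 -> 'I_(2 ^ j)) (J : nat -> 'I_(2 ^ j)).
Local Notation Iset := (Iset I).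
Local Notation Jset := (Jset n J).
Local Notation coll := (coll n I J).
Local Notation jcol := (jcol a).
Local Notation canon := (canon n I J).
Local Notation eta := ((n%:R)^-1 : rat).
Hypothesis a_gt0 : (0 < a)%N.
Hypothesis n_gt0 : (0 < n)%N.
Hypothesis j_large : (n + a + 1 <= j)%N.
Hypothesis L_lev : forall i, (1 <= i <= n + 2)%N ->
  dvalid (L i) /\ dlev (L i) = (j + 1 - a - i)%N.
Hypothesis L_parent : forall i, (1 <= i <= n + 1)%N -> dsub (L i) (L i.+1).
Hypothesis I_inj : injective I.
Hypothesis I_sub_L1 : forall t, dsub (dyD (I t)) (L 1%N).
Hypothesis J_sub_brother : forall i, (1 <= i <= n + 1)%N ->
  dsub (dyD (J i)) (dbrother (L i)).

Lemma L_sub i i' : (1 <= i <= i')%N -> (i' <= n + 2)%N -> dsub (L i) (L i').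
Proof.
case/andP=> i_gt0; elim: i' => [|i' IH]; first by move=> ? ?; exfalso; lia.
rewrite leq_eqVlt => /orP [/eqP <- _|ii' i'_le]; first exact: dsub_refl.
by apply: dsub_trans (IH ii' _) (L_parent _); lia.
Qed.

Lemma L_lev_lt i : (1 <= i <= n + 1)%N -> (dlev (L i.+1) < dlev (L i))%N.
Proof. by move=> hi; rewrite (L_lev (i := i.+1) _).2 ?(L_lev (i := i) _).2; lia. Qed.

Lemma I_sub_L t i : (1 <= i <= n + 2)%N -> dsub (dyD (I t)) (L i).
Proof. by move=> hi; apply: dsub_trans (I_sub_L1 t) (L_sub _ _); lia. Qed.

Lemma J_sub_L i i' : (1 <= i)%N -> (i < i' <= n + 2)%N -> dsub (dyD (J i)) (L i').
Proof.
move=> i_gt0 hi'; apply: dsub_trans (J_sub_brother _) _; first lia.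
apply: dsub_trans (dsub_dbrother (L_lev_lt _) (L_parent _)) (L_sub _ _); lia.
Qed.

Lemma J_notin_L i i' : (1 <= i' <= i)%N -> (i <= n + 1)%N -> ~~ dsub (dyD (J i)) (L i').
Proof.
move=> hi' hi; apply/negP => JL.
have JiB : dsub (dyD (J i)) (dbrother (L i)) by apply: J_sub_brother; lia.
by move/negP: (dsub_dbrother_contra JiB); apply; apply: dsub_trans JL (L_sub _ _); lia.
Qed.

(* A dyadic interval containing J_i1 and J_i2 (i1 < i2) meets L_i2 at J_i1; it cannot
   lie inside L_i2, which misses J_i2, so it contains L_i2 and hence every I_t. *)
Lemma I_sub_of_two_J K i1 i2 t : (1 <= i1)%N -> (i1 < i2 <= n + 1)%N ->
  dsub (dyD (J i1)) K -> dsub (dyD (J i2)) K -> dsub (dyD (I t)) K.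
Proof.
move=> i1_gt0 hi2 J1K J2K.
have J1L : dsub (dyD (J i1)) (L i2) by apply: J_sub_L; lia.
case: (leqP (dlev K) (dlev (L i2))) => levK.
  by apply: dsub_trans (dsub_nested J1K J1L levK); apply: I_sub_L; lia.
have /negP[] : ~~ dsub (dyD (J i2)) (L i2) by apply: J_notin_L; lia.
exact: dsub_trans J2K (dsub_nested J1L J1K (ltnW levK)).
Qed.

Lemma J_inj i1 i2 : (1 <= i1 <= n + 1)%N -> (1 <= i2 <= n + 1)%N ->
  J i1 = J i2 -> i1 = i2.
Proof.
wlog lt12 : i1 i2 / (i1 < i2)%N.
  move=> W h1 h2 J12; case: (ltngtP i1 i2) => [lt12|lt21|//]; first exact: W.
  by rewrite (W _ _ lt21 h2 h1).
move=> h1 h2 J12; have /negP[] : ~~ dsub (dyD (J i2)) (L i2) by apply: J_notin_L; lia.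
by rewrite -J12; apply: J_sub_L; lia.
Qed.

Lemma J_neq_I i t : (1 <= i <= n + 1)%N -> J i != I t.
Proof.
move=> hi; apply/eqP => JI.
have /negP[] : ~~ dsub (dyD (J i)) (L 1%N) by apply: J_notin_L; lia.
by rewrite JI.
Qed.

Lemma Jset_notin_Iset k x : x \in Jset k -> x \notin Iset.
Proof. by case/JsetP=> i ki -> ; apply/imsetP => [[t _]]; apply/eqP/J_neq_I; lia. Qed.

Lemma card_Iset : #|Iset| = (2 ^ a).-1.
Proof. by rewrite card_imset ?card_ord. Qed.

Lemma card_Jset k : (k <= n)%N -> #|Jset k| = k.+1.
Proof.
elim: k => [|k IH] kn; first by rewrite Jset0 cards1.
have Jnk : J (n - k)%N \notin Jset k.
  apply/JsetP => -[i hi Ji]; suff : (n - k)%N = i by lia.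
  by apply: J_inj => //; lia.
by rewrite JsetS // cardsU1 Jnk IH // ltnW.
Qed.

Lemma canon_colouring k : colouring (coll k) (canon k).
Proof.
split=> [i i'|].
  case: (unliftP jcol i) => [t ->|->]; case: (unliftP jcol i') => [t' ->|->];
    rewrite ?canon_lift ?canon_jcol ?eqxx // => neq.
  - by rewrite disjoints1 inE; apply: contra neq => /eqP /I_inj ->.
  - by rewrite disjoints1; apply/negP => /Jset_notin_Iset/negP; apply; apply: imset_f.
  - rewrite disjoint_sym disjoints1; apply/negP => /Jset_notin_Iset/negP.
    by apply; apply: imset_f.
apply/setP => x; apply/bigcupP/setUP => [[i _]|[/imsetP [t _ ->]|xJ]].
- by case: (unliftP jcol i) => [t ->|->]; rewrite ?canon_lift ?canon_jcol;
    [move/set1P ->; left; apply: imset_f | right].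
- by exists (lift jcol t); rewrite ?canon_lift ?set11.
- by exists jcol; rewrite ?canon_jcol.
Qed.

Lemma restr_Iset_of_Jset k K : (1 < #|restr (Jset k) K|)%N -> restr Iset K = Iset.
Proof.
case/card_gt1P => _ [_ [/setIdP [/JsetP [i1 h1 ->] K1] /setIdP [/JsetP [i2 h2 ->] K2] neq]].
apply/setP => x; rewrite inE; apply/andb_idr => /imsetP [t _ ->].
case: (ltngtP i1 i2) => [lt12|lt21|eq12]; last by rewrite eq12 eqxx in neq.
- by apply: (I_sub_of_two_J (i1 := i1) (i2 := i2)) => //; lia.
- by apply: (I_sub_of_two_J (i1 := i2) (i2 := i1)) => //; lia.
Qed.

Lemma card_IsetU (B : {set 'I_(2 ^ j)}) : (#|B| <= 1)%N -> (#|Iset :|: B| <= 2 ^ a)%N.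
Proof.
move=> B_le1; apply: leq_trans (leq_card_setU _ _).1 _.
by rewrite card_Iset (leq_trans (leq_add (leqnn _) B_le1)) // addn1 prednK // expn2_gt0.
Qed.

Lemma canon_homogeneous k : (k < n)%N -> homogeneous eta (coll k) (canon k).
Proof.
move=> kn; split=> [|K vK lK]; first exact: canon_colouring.
set R := restr (Jset k) K.
have restr_coll : restr (coll k) K = restr Iset K :|: R by rewrite restrU.
have [R_le1|R_gt1] := leqP #|R| 1.
  right; split.
    rewrite restr_coll; apply: leq_trans (card_IsetU R_le1).
    by apply/subset_leq_card/setSU/restr_subset.
  move=> i; case: (unliftP jcol i) => [t ->|->]; rewrite ?canon_lift ?canon_jcol //.
  by rewrite (leq_trans (subset_leq_card (restr_subset _ _))) ?cards1.
have IK := restr_Iset_of_Jset R_gt1.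
have R_le : (#|R| <= k.+1)%N.
  by rewrite -(card_Jset (ltnW kn)) subset_leq_card // restr_subset.
have IR : [disjoint Iset & R].
  rewrite disjoint_sym disjoints_subset; apply/subsetP => x /setIdP [xJ _].
  by rewrite inE (Jset_notin_Iset xJ).
have card_colour i : (0 < #|restr (canon k i) K| <= n)%N.
  case: (unliftP jcol i) => [t ->|->]; rewrite ?canon_lift ?canon_jcol -/R; last lia.
  suff -> : restr [set I t] K = [set I t] by rewrite cards1.
  apply/setP => x; rewrite inE; apply/andb_idr => /set1P ->.
  have : I t \in restr Iset K by rewrite IK imset_f.
  by case/setIdP.
left; split=> [|i i'].
  have := (leq_card_setU Iset R).2; rewrite IR restr_coll IK => /eqP ->.
  rewrite card_Iset; move: R_gt1; have := expn2_gt0.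
  by set d := (2 ^ a)%N; set r := #|R|; lia.
apply: ler_invn_mulr_nat; have := card_colour i; have := card_colour i'; lia.
Qed.

Lemma restr_coll_L k : (k < n)%N ->
  restr (coll k.+1) (L (n - k + 1)%N) \subset Iset :|: [set J (n - k)%N].
Proof.
move=> kn; apply/subsetP => x /setIdP [/setUP [xI|/JsetP [i hi ->]] xL].
  by rewrite in_setU xI.
have -> : i = (n - k)%N; last by rewrite in_setU set11 orbT.
apply/eqP; rewrite eqn_leq; apply/andP; split; last lia.
by apply: contraLR xL; rewrite -ltnNge => lt_i; apply: J_notin_L; lia.
Qed.

(* The only admissible place for J_(n-k) is the colour of the other J's: in any other
   colour it would sit with some I_t inside L_(n-k+1), an interval holding at most d
   elements of the collection, which forces colours of size at most one there. *)
Lemma canon_extension k X : (k < n)%N ->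
  homogeneous eta (coll k.+1) X -> extends (canon k) X -> X = canon k.+1.
Proof.
move=> kn homX ext; have colX := homX.1; rewrite coll_succ // in colX.
have [c Xc] := colouring_extend1 (canon_colouring k) colX ext.
have /L_lev [vL levL] : (1 <= n - k + 1 <= n + 2)%N by lia.
have c_jcol : c = jcol.
  case: (unliftP jcol c) => [t ct|//]; exfalso.
  have card_L : (#|restr (coll k.+1) (L (n - k + 1)%N)| <= 2 ^ a)%N.
    apply: leq_trans (subset_leq_card (restr_coll_L kn)) (card_IsetU _).
    by rewrite cards1.
  have lL : (dlev (L (n - k + 1)%N) <= j)%N by rewrite levL; lia.
  have := homogeneous_card_le1 homX vL lL card_L c.
  rewrite Xc eqxx ct canon_lift; apply/negP; rewrite -ltnNge; apply/card_gt1P.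
  exists (I t), (J (n - k)%N).
  by rewrite !inE !eqxx orbT /= eq_sym J_neq_I ?I_sub_L ?J_sub_L //; lia.
apply/ffunP => i; rewrite Xc c_jcol.
case: (unliftP jcol i) => [t ->|->].
  by rewrite eq_sym (negbTE (neq_lift _ _)) !canon_lift.
by rewrite eqxx !canon_jcol JsetS // setUC.
Qed.

Lemma homogeneous_coll0 Y :
  homogeneous eta (coll 0) Y -> exists s, Y = recolour s (canon 0).
Proof.
move=> homY.
apply: (colouring_singletons_perm (canon_colouring 0) homY.1 (canon0 n I J)) => i.
rewrite -(restr_root (Y i)).
apply: (homogeneous_card_le1 (K := Dyad 0 0) homY isT (leq0n j) _ i).
by rewrite restr_root /coll Jset0 card_IsetU ?cards1.
Qed.

Lemma recolour_canon_extension k s X : (k < n)%N ->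
  homogeneous eta (coll k.+1) X -> extends (recolour s (canon k)) X ->
  X = recolour s (canon k.+1).
Proof.
move=> kn homX ext; rewrite -[X](recolourKV s); congr recolour.
apply: canon_extension kn (homogeneous_recolour _ homX) _.
by rewrite -(recolourK s (canon k)); apply: extends_recolour.
Qed.

Lemma stage_recolour k X : (k < n)%N ->
  stage eta coll k X -> exists s, X = recolour s (canon k).
Proof.
elim: k X => [|k IH] X kn /=; first exact: homogeneous_coll0.
case=> homX [Y [stY ext]]; have [s YE] := IH Y (ltnW kn) stY.
by exists s; apply: recolour_canon_extension (ltnW kn) homX _; rewrite -YE.
Qed.

Lemma expn2_gt1 : (1 < 2 ^ a)%N.
Proof. by rewrite -{1}(expn0 2) ltn_exp2l. Qed.

Lemma canon_not_homogeneous : ~ homogeneous eta (coll n) (canon n).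
Proof.
have t_lt : (0 < (2 ^ a).-1)%N by rewrite ltn_predRL expn2_gt1.
pose t : 'I_(2 ^ a).-1 := Ordinal t_lt.
case=> _ /(_ (Dyad 0 0) isT (leq0n j)) [[_ /(_ jcol (lift jcol t))]|[_ /(_ jcol)]].
  rewrite !restr_root canon_jcol canon_lift card_Jset // cards1.
  by apply/negP; rewrite -ltNge; apply: ltr_invn_mulr_succ.
by rewrite restr_root canon_jcol card_Jset // ltnNge n_gt0.
Qed.

End Construction.

Theorem proposition3p1 (a n j : nat) (L : nat -> dyad)
    (I : 'I_(2 ^ a).-1 -> 'I_(2 ^ j)) (J : nat -> 'I_(2 ^ j)) :
  (0 < a)%N -> (0 < n)%N -> (n + a + 1 <= j)%N ->
  (forall i, (1 <= i <= n + 2)%N -> dvalid (L i) /\ dlev (L i) = (j + 1 - a - i)%N) ->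
  (forall i, (1 <= i <= n + 1)%N -> dsub (L i) (L i.+1)) ->
  injective I ->
  (forall i, dsub (dyD (I i)) (L 1%N)) ->
  (forall i, (1 <= i <= n + 1)%N -> dsub (dyD (J i)) (dbrother (L i))) ->
  let eta : rat := (n%:R)^-1 in
  let Cs : nat -> {set 'I_(2 ^ j)} := fun k =>
    [set I i | i : 'I_(2 ^ a).-1] :|:
    [set x | [exists i : 'I_(n + 2), (n - k + 1 <= i)%N && (x == J i)]] in
  (forall k, (k < n)%N -> Cs k \subset Cs k.+1) /\
  (* (A) *)
  (exists X : {ffun 'I_(2 ^ a) -> {set 'I_(2 ^ j)}},
     homogeneous eta (Cs 0%N) X /\
     forall Y : {ffun 'I_(2 ^ a) -> {set 'I_(2 ^ j)}},
       homogeneous eta (Cs 0%N) Y ->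
       exists s : {perm 'I_(2 ^ a)}, forall i, Y i = X (s i)) /\
  (* (B) *)
  (forall k, (1 <= k <= n - 1)%N ->
     forall X : {ffun 'I_(2 ^ a) -> {set 'I_(2 ^ j)}},
       stage eta Cs (k - 1) X ->
       exists! Y : {ffun 'I_(2 ^ a) -> {set 'I_(2 ^ j)}},
         homogeneous eta (Cs k) Y /\ extends X Y) /\
  (* (C) *)
  (forall X : {ffun 'I_(2 ^ a) -> {set 'I_(2 ^ j)}},
     stage eta Cs (n - 1) X ->
     ~ exists Y : {ffun 'I_(2 ^ a) -> {set 'I_(2 ^ j)}},
         homogeneous eta (Cs n) Y /\ extends X Y).
Proof.
move=> a_gt0 n_gt0 j_large L_lev L_parent I_inj I_sub_L1 J_sub_brother eta Cs.
have homC k : (k < n)%N -> homogeneous eta (Cs k) (canon n I J k).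
  by move=> kn; apply: (canon_homogeneous (L := L)).
have stageC k X : (k < n)%N -> stage eta Cs k X -> exists s, X = recolour s (canon n I J k).
  by move=> kn; apply: (stage_recolour (L := L)).
have extC k s Y : (k < n)%N -> homogeneous eta (Cs k.+1) Y ->
    extends (recolour s (canon n I J k)) Y -> Y = recolour s (canon n I J k.+1).
  by move=> kn; apply: (recolour_canon_extension (L := L)).
split; [|split; [|split]].
- by move=> k kn; apply/setUS/Jset_subset.
- exists (canon n I J 0); split=> [|Y homY]; first exact: homC.
  have [s ->] := stageC 0%N Y n_gt0 homY.
  by exists s => i; rewrite ffunE.
- case=> [//|k] k_range X; rewrite subn1 => /stageC [|s ->]; first lia.
  exists (recolour s (canon n I J k.+1)); split=> [|Y [homY ext]].
    split; first by apply/homogeneous_recolour/homC; lia.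
    exact/extends_recolour/canon_extends.
  by apply/esym/extC => //; lia.
- have n_pred : (n - 1).+1 = n by lia.
  move=> X /stageC [|s ->]; first lia.
  case=> Y [homY ext]; have YE : Y = recolour s (canon n I J n).
    by move: (extC (n - 1)%N s Y); rewrite n_pred; apply=> //; lia.
  apply: (canon_not_homogeneous (I := I) a_gt0 n_gt0 j_large L_lev L_parent J_sub_brother).
  by rewrite -(recolourK s (canon n I J n)) -YE; apply: homogeneous_recolour.
Qed.
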